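(* Let $G$ be a cubical $\omega$-category with connections. If $x\in\Phi_n(G_n)$ and $1\le m\le n$, then $\partial^\alpha_mx=\varepsilon_1^{m-1}(\partial^\alpha_1)^mx$ and $\varepsilon_m\partial^\alpha_mx=\varepsilon_1^m(\partial^\alpha_1)^mx$, for $\alpha=\pm$.
   Context: A cubical $\omega$-category with connections $G$ consists of sets $G_n$ ($n\ge0$), face maps $\partial^\alpha_i:G_n\to G_{n-1}$, degeneracies $\varepsilon_i:G_{n-1}\to G_n$, connections $\Gamma^\alpha_i:G_n\to G_{n+1}$ ($1\le i\le n$, $\alpha=\pm$) and partial compositions $\circ_j$ on $G_n$ ($1\le j\le n$, $a\circ_jb$ defined iff $\partial^+_ja=\partial^-_jb$) satisfying: $\partial^\alpha_i\partial^\beta_j=\partial^\beta_{j-1}\partial^\alpha_i$ ($i<j$), $\varepsilon_i\varepsilon_j=\varepsilon_{j+1}\varepsilon_i$ ($i\le j$), $\partial^\alpha_i\varepsilon_j=\varepsilon_{j-1}\partial^\alpha_i$ ($i<j$), $\varepsilon_j\partial^\alpha_{i-1}$ ($i>j$), $\mathrm{id}$ ($i=j$); $\Gamma^\alpha_i\Gamma^\beta_j=\Gamma^\beta_{j+1}\Gamma^\alpha_i$ ($i<j$), $\Gamma^\alpha_i\Gamma^\alpha_i=\Gamma^\alpha_{i+1}\Gamma^\alpha_i$, $\Gamma^\alpha_i\varepsilon_j=\varepsilon_{j+1}\Gamma^\alpha_i$ ($i<j$), $\varepsilon_j\Gamma^\alpha_{i-1}$ ($i>j$), $\Gamma^\alpha_j\varepsilon_j=\varepsilon_{j+1}\varepsilon_j$,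 $\partial^\alpha_i\Gamma^\beta_j=\Gamma^\beta_{j-1}\partial^\alpha_i$ ($i<j$), $\Gamma^\beta_j\partial^\alpha_{i-1}$ ($i>j+1$), $\partial^\alpha_j\Gamma^\alpha_j=\partial^\alpha_{j+1}\Gamma^\alpha_j=\mathrm{id}$, $\partial^\alpha_j\Gamma^{-\alpha}_j=\partial^\alpha_{j+1}\Gamma^{-\alpha}_j=\varepsilon_j\partial^\alpha_j$; $\partial^-_j(a\circ_jb)=\partial^-_ja$, $\partial^+_j(a\circ_jb)=\partial^+_jb$, $\partial^\alpha_i(a\circ_jb)=\partial^\alpha_ia\circ_{j-1}\partial^\alpha_ib$ ($i<j$), $\partial^\alpha_ia\circ_j\partial^\alpha_ib$ ($i>j$); interchange for $i\ne j$; $\varepsilon_i(a\circ_jb)=\varepsilon_ia\circ_{j+1}\varepsilon_ib$ ($i\le j$), $\varepsilon_ia\circ_j\varepsilon_ib$ ($i>j$); $\Gamma^\alpha_i(a\circ_jb)=\Gamma^\alpha_ia\circ_{j+1}\Gamma^\alpha_ib$ ($i<j$), $\Gamma^\alpha_ia\circ_j\Gamma^\alpha_ib$ ($i>j$); $\Gamma^+_j(a\circ_jb)=(\Gamma^+_ja\circ_j\varepsilon_ja)\circ_{j+1}(\varepsilon_{j+1}a\circ_j\Gamma^+_jb)$, $\Gamma^-_j(a\circ_jb)=(\Gamma^-_ja\circ_j\varepsilon_{j+1}b)\circ_{j+1}(\varepsilon_jb\circ_j\Gamma^-_jb)$; each $\circ_j$ is a category structure with identities $\varepsilon_jy$; $\Gamma^+_ix\circ_i\Gamma^-_ix=\varepsilon_{i+1}x$,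 $\Gamma^+_ix\circ_{i+1}\Gamma^-_ix=\varepsilon_ix$. Folding operations on $G_n$: $\psi_ix=\Gamma^+_i\partial^-_{i+1}x\circ_{i+1}x\circ_{i+1}\Gamma^-_i\partial^+_{i+1}x$ ($1\le i\le n-1$), $\Psi_r=\psi_{r-1}\cdots\psi_1$, $\Phi_n=\Psi_1\Psi_2\cdots\Psi_n$. *)

From mathcomp Require Import all_boot.
Unset Printing Implicit Defensive.

(* Indexing conventions (signs: true = +, false = -):
   face n i a  : G n.+1 -> G n       is d^a_i,      meaningful for 1 <= i <= n+1
   eps  n i    : G n -> G n.+1       is eps_i,      meaningful for 1 <= i <= n+1
   conn n i a  : G n -> G n.+1       is Gamma^a_i,  meaningful for 1 <= i <= n
   comp n j    : G n -> G n -> G n   is o_j,        meaningful for 1 <= j <= n,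
   a o_j b being defined iff d^+_j a = d^-_j b; comp is a total function whose
   value is only constrained on composable pairs. *)
Record cubical_omega_cat_conn := CubCat {
  cG : nat -> Type;
  face : forall n : nat, nat -> bool -> cG n.+1 -> cG n;
  eps : forall n : nat, nat -> cG n -> cG n.+1;
  conn : forall n : nat, nat -> bool -> cG n -> cG n.+1;
  comp : forall n : nat, nat -> cG n -> cG n -> cG n;

  face_face : forall n i j a b (x : cG n.+2), 1 <= i -> i < j -> j <= n.+2 ->
    face n i a (face n.+1 j b x) = face n j.-1 b (face n.+1 i a x);
  eps_eps : forall n i j (x : cG n), 1 <= i -> i <= j -> j <= n.+1 ->
    eps n.+1 i (eps n j x) = eps n.+1 j.+1 (eps n i x);
  face_eps_lt : forall n i j a (x : cG n.+1), 1 <= i -> i < j -> j <= n.+2 ->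
    face n.+1 i a (eps n.+1 j x) = eps n j.-1 (face n i a x);
  face_eps_gt : forall n i j a (x : cG n.+1), 1 <= j -> j < i -> i <= n.+2 ->
    face n.+1 i a (eps n.+1 j x) = eps n j (face n i.-1 a x);
  face_eps_eq : forall n i a (x : cG n), 1 <= i -> i <= n.+1 ->
    face n i a (eps n i x) = x;

  conn_conn_lt : forall n i j a b (x : cG n), 1 <= i -> i < j -> j <= n ->
    conn n.+1 i a (conn n j b x) = conn n.+1 j.+1 b (conn n i a x);
  conn_conn_eq : forall n i a (x : cG n), 1 <= i -> i <= n ->
    conn n.+1 i a (conn n i a x) = conn n.+1 i.+1 a (conn n i a x);
  conn_eps_lt : forall n i j a (x : cG n), 1 <= i -> i < j -> j <= n.+1 ->
    conn n.+1 i a (eps n j x) = eps n.+1 j.+1 (conn n i a x);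
  conn_eps_gt : forall n i j a (x : cG n), 1 <= j -> j < i -> i <= n.+1 ->
    conn n.+1 i a (eps n j x) = eps n.+1 j (conn n i.-1 a x);
  conn_eps_eq : forall n j a (x : cG n), 1 <= j -> j <= n.+1 ->
    conn n.+1 j a (eps n j x) = eps n.+1 j.+1 (eps n j x);
  face_conn_lt : forall n i j a b (x : cG n.+1), 1 <= i -> i < j -> j <= n.+1 ->
    face n.+1 i a (conn n.+1 j b x) = conn n j.-1 b (face n i a x);
  face_conn_gt : forall n i j a b (x : cG n.+1), 1 <= j -> j.+1 < i -> i <= n.+2 ->
    face n.+1 i a (conn n.+1 j b x) = conn n j b (face n i.-1 a x);
  face_conn_same1 : forall n j a (x : cG n), 1 <= j -> j <= n ->
    face n j a (conn n j a x) = x;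
  face_conn_same2 : forall n j a (x : cG n), 1 <= j -> j <= n ->
    face n j.+1 a (conn n j a x) = x;
  face_conn_opp1 : forall n j a (x : cG n.+1), 1 <= j -> j <= n.+1 ->
    face n.+1 j a (conn n.+1 j (~~ a) x) = eps n j (face n j a x);
  face_conn_opp2 : forall n j a (x : cG n.+1), 1 <= j -> j <= n.+1 ->
    face n.+1 j.+1 a (conn n.+1 j (~~ a) x) = eps n j (face n j a x);

  face_comp_minus : forall n j (x y : cG n.+1), 1 <= j -> j <= n.+1 ->
    face n j true x = face n j false y ->
    face n j false (comp n.+1 j x y) = face n j false x;
  face_comp_plus : forall n j (x y : cG n.+1), 1 <= j -> j <= n.+1 ->
    face n j true x = face n j false y ->
    face n j true (comp n.+1 j x y) = face n j true y;
  face_comp_lt : forall n i j a (x y : cG n.+1), 1 <= i -> i < j -> j <= n.+1 ->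
    face n j true x = face n j false y ->
    face n i a (comp n.+1 j x y) = comp n j.-1 (face n i a x) (face n i a y);
  face_comp_gt : forall n i j a (x y : cG n.+1), 1 <= j -> j < i -> i <= n.+1 ->
    face n j true x = face n j false y ->
    face n i a (comp n.+1 j x y) = comp n j (face n i a x) (face n i a y);

  interchange : forall n i j (x y z w : cG n.+1),
    1 <= i -> i <= n.+1 -> 1 <= j -> j <= n.+1 -> i != j ->
    face n i true x = face n i false y -> face n i true z = face n i false w ->
    face n j true x = face n j false z -> face n j true y = face n j false w ->
    comp n.+1 j (comp n.+1 i x y) (comp n.+1 i z w)
    = comp n.+1 i (comp n.+1 j x z) (comp n.+1 j y w);

  eps_comp_le : forall n i j (x y : cG n.+1), 1 <= i -> i <= j -> j <= n.+1 ->
    face n j true x = face n j false y ->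
    eps n.+1 i (comp n.+1 j x y) = comp n.+2 j.+1 (eps n.+1 i x) (eps n.+1 i y);
  eps_comp_gt : forall n i j (x y : cG n.+1), 1 <= j -> j < i -> i <= n.+2 ->
    face n j true x = face n j false y ->
    eps n.+1 i (comp n.+1 j x y) = comp n.+2 j (eps n.+1 i x) (eps n.+1 i y);

  conn_comp_lt : forall n i j a (x y : cG n.+1), 1 <= i -> i < j -> j <= n.+1 ->
    face n j true x = face n j false y ->
    conn n.+1 i a (comp n.+1 j x y) = comp n.+2 j.+1 (conn n.+1 i a x) (conn n.+1 i a y);
  conn_comp_gt : forall n i j a (x y : cG n.+1), 1 <= j -> j < i -> i <= n.+1 ->
    face n j true x = face n j false y ->
    conn n.+1 i a (comp n.+1 j x y) = comp n.+2 j (conn n.+1 i a x) (conn n.+1 i a y);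
  conn_comp_plus : forall n j (x y : cG n.+1), 1 <= j -> j <= n.+1 ->
    face n j true x = face n j false y ->
    conn n.+1 j true (comp n.+1 j x y)
    = comp n.+2 j.+1 (comp n.+2 j (conn n.+1 j true x) (eps n.+1 j x))
                     (comp n.+2 j (eps n.+1 j.+1 x) (conn n.+1 j true y));
  conn_comp_minus : forall n j (x y : cG n.+1), 1 <= j -> j <= n.+1 ->
    face n j true x = face n j false y ->
    conn n.+1 j false (comp n.+1 j x y)
    = comp n.+2 j.+1 (comp n.+2 j (conn n.+1 j false x) (eps n.+1 j.+1 y))
                     (comp n.+2 j (eps n.+1 j y) (conn n.+1 j false y));

  comp_assoc : forall n j (x y z : cG n.+1), 1 <= j -> j <= n.+1 ->
    face n j true x = face n j false y -> face n j true y = face n j false z ->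
    comp n.+1 j (comp n.+1 j x y) z = comp n.+1 j x (comp n.+1 j y z);
  comp_id_l : forall n j (x : cG n.+1), 1 <= j -> j <= n.+1 ->
    comp n.+1 j (eps n j (face n j false x)) x = x;
  comp_id_r : forall n j (x : cG n.+1), 1 <= j -> j <= n.+1 ->
    comp n.+1 j x (eps n j (face n j true x)) = x;

  conn_inv1 : forall n i (x : cG n), 1 <= i -> i <= n ->
    comp n.+1 i (conn n i true x) (conn n i false x) = eps n i.+1 x;
  conn_inv2 : forall n i (x : cG n), 1 <= i -> i <= n ->
    comp n.+1 i.+1 (conn n i true x) (conn n i false x) = eps n i x
}.

Section Folding.
Variable G : cubical_omega_cat_conn.

(* psi_i x = Gamma^+_i d^-_{i+1} x  o_{i+1}  x  o_{i+1}  Gamma^-_i d^+_{i+1} x,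
   on G_{n+1}, for 1 <= i <= n *)
Definition psi (n i : nat) (x : cG G n.+1) : cG G n.+1 :=
  comp G n.+1 i.+1
    (comp G n.+1 i.+1 (conn G n i true (face G n i.+1 false x)) x)
    (conn G n i false (face G n i.+1 true x)).

Fixpoint psi_upto (n k : nat) (x : cG G n.+1) : cG G n.+1 :=
  match k with
  | 0 => x
  | k'.+1 => psi n k'.+1 (psi_upto n k' x)
  end.

Definition Psi (n r : nat) (x : cG G n.+1) : cG G n.+1 := psi_upto n r.-1 x.

Fixpoint Phi_upto (n k : nat) (x : cG G n.+1) : cG G n.+1 :=
  match k with
  | 0 => x
  | k'.+1 => Phi_upto n k' (Psi n k'.+1 x)
  end.

(* Phi_{n+1} on G_{n+1} *)
Definition Phi (n : nat) (x : cG G n.+1) : cG G n.+1 := Phi_upto n n.+1 x.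

Fixpoint face1_iter (p k : nat) (a : bool) : cG G (k + p) -> cG G p :=
  match k return cG G (k + p) -> cG G p with
  | 0 => fun x => x
  | k'.+1 => fun x => face1_iter p k' a (face G (k' + p) 1 a x)
  end.

Fixpoint eps1_iter (p k : nat) : cG G p -> cG G (k + p) :=
  match k return cG G p -> cG G (k + p) with
  | 0 => fun x => x
  | k'.+1 => fun x => eps G (k' + p) 1 (eps1_iter p k' x)
  end.

End Folding.

(* Write Phi_n = Phi_{m-1} Psi_m (Psi_{m+1} ... Psi_n), so that x = Phi_{m-1} (Psi_m z).
   The face d_m commutes with Phi_{m-1}, which only involves psi_i with i + 1 < m, and
   d^a_m (Psi_m z) = eps_1^{m-1} (d^a_1)^m z because each psi_i replaces the
   (i+1)-faces by eps_i-degenerate ones.  An element eps_1^{m-1} u has eps_i-degenerate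
   (i+1)-faces for every i < m - 1, on which psi_i acts by identities and connections of
   degeneracies, so Phi_{m-1} fixes it.  Hence d^a_m x = eps_1^{m-1} w with
   w = (d^a_1)^m z, and applying (d^a_1)^{m-1} shows w = (d^a_1)^m x. *)
From Pilot Require Import Defs.
From mathcomp Require Import all_boot zify.

Section Folding.
Variable G : cubical_omega_cat_conn.

Local Notation face := (face G).
Local Notation eps := (eps G).
Local Notation conn := (conn G).
Local Notation comp := (Defs.comp G).

Section PsiComposable.
Context {n i : nat} {y : cG G n.+2}.
Hypotheses (i_ge1 : 1 <= i) (i_le : i <= n.+1).

Lemma psi_left_composable :
  face n.+1 i.+1 true (conn n.+1 i true (face n.+1 i.+1 false y))
  = face n.+1 i.+1 false y.
Proof. by rewrite face_conn_same2 //; lia. Qed.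

Lemma psi_right_composable :
  face n.+1 i.+1 true (comp n.+2 i.+1 (conn n.+1 i true (face n.+1 i.+1 false y)) y)
  = face n.+1 i.+1 false (conn n.+1 i false (face n.+1 i.+1 true y)).
Proof.
by rewrite face_comp_plus ?psi_left_composable ?face_conn_same2 //; lia.
Qed.

Lemma psi_id_of_degenerate_faces {v w : cG G n} :
  face n.+1 i.+1 false y = eps n i v -> face n.+1 i.+1 true y = eps n i w ->
  psi G n.+1 i y = y.
Proof.
move=> yv yw; rewrite /psi yv yw !conn_eps_eq // -yv -yw.
by rewrite comp_id_l ?comp_id_r //; lia.
Qed.

Lemma face_succ_psi a :
  face n.+1 i.+1 a (psi G n.+1 i y) = eps n i (face n i a (face n.+1 i.+1 a y)).
Proof.
have c1 := psi_left_composable; have c2 := psi_right_composable.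
rewrite /psi; case: a.
  by rewrite face_comp_plus //; exact: face_conn_opp2.
by rewrite !face_comp_minus //; exact: face_conn_opp2.
Qed.

End PsiComposable.

Lemma face_psi n i j a (x : cG G n.+2) : 1 <= i -> i.+1 < j -> j <= n.+2 ->
  face n.+1 j a (psi G n.+1 i x) = psi G n i (face n.+1 j a x).
Proof.
move=> i_ge1 ij j_le.
have c1 := @psi_left_composable n i x i_ge1 ltac:(lia).
have c2 := @psi_right_composable n i x i_ge1 ltac:(lia).
rewrite /psi face_comp_gt // face_comp_gt //.
by rewrite !face_conn_gt -?face_face //; lia.
Qed.

Lemma face_psi_upto n k j a (x : cG G n.+2) : k.+1 < j -> j <= n.+2 ->
  face n.+1 j a (psi_upto G n.+1 k x) = psi_upto G n k (face n.+1 j a x).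
Proof.
elim: k => [|k IHk] kj j_le //=.
by rewrite face_psi ?IHk //; lia.
Qed.

Lemma face_Phi_upto n k j a (x : cG G n.+2) : k < j -> j <= n.+2 ->
  face n.+1 j a (Phi_upto G n.+1 k x) = Phi_upto G n k (face n.+1 j a x).
Proof.
elim: k x => [|k IHk] x kj j_le //=.
rewrite IHk; [|lia..].
by rewrite /Psi /=; case: k {IHk} kj => [|k] kj //; rewrite face_psi_upto //; lia.
Qed.

Lemma Phi_upto_split n K j (x : cG G n.+1) : j <= K ->
  exists z, Phi_upto G n K x = Phi_upto G n j z.
Proof.
elim: K x => [|K IHK] x jK; first by exists x; have -> : j = 0 by lia.
have [Kj | jK'] := ltnP K j; last exact: IHK.
by exists x; have -> : j = K.+1 by lia.
Qed.

Lemma eps_eps1_iter k p j (u : cG G p) : 1 <= j -> j <= k.+1 ->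
  eps (k + p) j (eps1_iter G p k u) = eps1_iter G p k.+1 u.
Proof.
elim: k j => [|k IHk] [|j] // j_ge1 j_le; first by case: j j_le {j_ge1}.
case: j j_ge1 j_le => [|j] _ j_le //=.
by rewrite -(eps_eps G (k + p) 1 j.+1) ?IHk //; lia.
Qed.

Lemma face1_iter_face k p a (z : cG G (k + p).+1) :
  face1_iter G p k a (face (k + p) k.+1 a z) = face1_iter G p k a (face (k + p) 1 a z).
Proof.
elim: k z => [|k IHk] z //=.
by rewrite (face_face G (k + p) 1 k.+2) //; lia.
Qed.

Lemma face1_iter_eps1_iter k p a (u : cG G p) :
  face1_iter G p k a (eps1_iter G p k u) = u.
Proof. by elim: k => [|k IHk] //=; rewrite face_eps_eq. Qed.

Lemma face_psi_upto_diag k p a (z : cG G (k + p).+1) :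
  face (k + p) k.+1 a (psi_upto G (k + p) k z) = eps1_iter G p k (face1_iter G p k.+1 a z).
Proof.
elim: k z => [|k IHk] z //.
change (face (k + p).+1 k.+2 a (psi G (k + p).+1 k.+1 (psi_upto G (k + p).+1 k z))
  = eps (k + p) 1 (eps1_iter G p k (face1_iter G p k.+1 a (face (k + p).+1 1 a z)))).
rewrite face_succ_psi ?face_psi_upto ?IHk ?eps_eps1_iter -?face1_iter_face //; lia.
Qed.

Lemma psi_upto_eps1_iter k p j (u : cG G p) : j <= k.+1 ->
  psi_upto G (k.+1 + p) j (eps1_iter G p k.+2 u) = eps1_iter G p k.+2 u.
Proof.
elim: j => [|j IHj] jk //=.
rewrite IHj; last lia.
have face_eu b : face (k + p).+1 j.+2 b (eps1_iter G p k.+2 u)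
                 = eps (k + p) j.+1 (eps1_iter G p k u).
  by rewrite -(@eps_eps1_iter k.+1 p j.+2) ?face_eps_eq ?eps_eps1_iter //; lia.
by apply: (psi_id_of_degenerate_faces _ _ (face_eu false) (face_eu true)); lia.
Qed.

Lemma Phi_upto_eps1_iter k p j (u : cG G p) : j <= k.+1 ->
  Phi_upto G (k + p) j (eps1_iter G p k.+1 u) = eps1_iter G p k.+1 u.
Proof.
elim: j => [|j IHj] jk //.
have Psi_eu : Psi G (k + p) j.+1 (eps1_iter G p k.+1 u) = eps1_iter G p k.+1 u.
  case: j {IHj} jk => [|j] jk //; case: k u jk => [|k] u jk; first by [].
  exact: psi_upto_eps1_iter.
change (Phi_upto G (k + p) j (Psi G (k + p) j.+1 (eps1_iter G p k.+1 u))
  = eps1_iter G p k.+1 u).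
by rewrite Psi_eu IHj //; lia.
Qed.

Lemma face_Phi_upto_diag k p a (z : cG G (k + p).+1) :
  face (k + p) k.+1 a (Phi_upto G (k + p) k.+1 z)
  = eps1_iter G p k (face1_iter G p k.+1 a z).
Proof.
case: k z => [|k] z //.
change (face (k + p).+1 k.+2 a (Phi_upto G (k + p).+1 k.+1 (psi_upto G (k + p).+1 k.+1 z))
  = eps1_iter G p k.+1 (face1_iter G p k.+2 a z)).
by rewrite face_Phi_upto ?(face_psi_upto_diag k.+1) ?Phi_upto_eps1_iter //; lia.
Qed.

Lemma face_Phi_upto_eps1 {k p : nat} (a : bool) {z x : cG G (k + p).+1} :
  x = Phi_upto G (k + p) k.+1 z ->
  face (k + p) k.+1 a x = eps1_iter G p k (face1_iter G p k.+1 a x).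
Proof.
move=> xE; have dx := face_Phi_upto_diag k p a z; rewrite -xE in dx.
suff -> : face1_iter G p k.+1 a x = face1_iter G p k.+1 a z by [].
by rewrite /= -face1_iter_face dx face1_iter_eps1_iter.
Qed.

End Folding.

Theorem proposition3p6 (G : cubical_omega_cat_conn) (k p : nat) (a : bool)
    (x : cG G (k.+1 + p)) :
  (exists y : cG G (k + p).+1, x = Phi G (k + p) y) ->
  face G (k + p) k.+1 a x = eps1_iter G p k (face1_iter G p k.+1 a x) /\
  eps G (k + p) k.+1 (face G (k + p) k.+1 a x) = eps1_iter G p k.+1 (face1_iter G p k.+1 a x).
Proof.
case=> y xE.
have [z Phi_yz] := @Phi_upto_split G (k + p) (k + p).+1 k.+1 y ltac:(lia).
have dx := face_Phi_upto_eps1 G a (etrans xE Phi_yz).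
by rewrite dx eps_eps1_iter.
Qed.
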